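(* Let $p>5$ be a prime with $p\equiv \pm1\pmod 5$. Let $f(x)=x^5-5x^3+5x+2-4t\in\mathbb F_p[t][x]$, write $f(x)^{(p-1)/2}=\sum_r c_r x^r$ with $c_r\in\mathbb F_p[t]$, and let $a(t)=c_{p-1}$, $b(t)=c_{2p-2}$ be the diagonal entries of $N=\begin{pmatrix}c_{p-1}&c_{p-2}\\c_{2p-1}&c_{2p-2}\end{pmatrix}$ (the $p$-th power of the Cartier–Manin matrix of $C^-:y^2=f(x)$ with respect to the basis $dx/y,\ x\,dx/y$, which is diagonal for such $p$). Then, as polynomials in $t$ over $\mathbb F_p$, $$\deg a(t)=\begin{cases}\tfrac32 k,& p=5k+1,\\ \tfrac32 k-1,& p=5k-1,\end{cases}\qquad \deg b(t)=\begin{cases}\tfrac12 k,& p=5k+1,\\ \tfrac12 k-1,& p=5k-1.\end{cases}$$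
   Context: For a hyperelliptic curve $y^2=f(x)$ of genus $g$ over a field of characteristic $p>2$, the Cartier–Manin matrix with respect to the basis $x^{j-1}dx/y$ ($j=1,\dots,g$) of $H^0(C,\Omega^1_C)$ is $N^{(1/p)}$, where $N=(c_{ip-j})_{i,j}$ and $f(x)^{(p-1)/2}=\sum c_r x^r$. *)

From mathcomp Require Import all_boot all_order all_algebra.
Set Implicit Arguments. Unset Strict Implicit. Unset Printing Implicit Defensive.
Import GRing.Theory.
Local Open Scope ring_scope.

(* The curve polynomial f(x) = x^5 - 5x^3 + 5x + 2 - 4t in F_p[t][x]:
   outer polynomial variable is x, inner (coefficient) variable is t. *)
Definition fpoly (p : nat) : {poly {poly 'F_p}} :=
  'X^5 - 5%:R *: 'X^3 + 5%:R *: 'X + ((2%:R - 4%:R *: 'X : {poly 'F_p})%:P).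

Definition cm_coef (p r : nat) : {poly 'F_p} :=
  ((fpoly p) ^+ (p.-1)./2)`_r.

Definition cmN (p : nat) : 'M[{poly 'F_p}]_2 :=
  \matrix_(i < 2, j < 2) cm_coef p (i.+1 * p - j.+1)%N.

From mathcomp Require Import all_boot all_order all_algebra.
From mathcomp Require Import zify ring.
Set Implicit Arguments. Unset Strict Implicit. Unset Printing Implicit Defensive.
Import GRing.Theory.
Local Open Scope ring_scope.

(* Writing f = f0(x) - 4t with f0 = x^5 - 5x^3 + 5x + 2, the binomial theorem
   gives c_r = sum_j C(n,j) [x^r](f0^(n-j)) (-4t)^j with n = (p-1)/2.  Since
   deg f0^m = 5m, the degree of c_r in t is n - m, where m is the least
   exponent with [x^r](f0^m) <> 0, provided that coefficient and C(n,m) are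
   nonzero mod p.  For r = p-1 and r = 2p-2 this m is ceil(r/5), and the
   relevant coefficient is one of the three top coefficients 1, -5m and
   5m + 25 C(m,2) of f0^m, which are units mod p for p = +-1 mod 5. *)

Lemma coef_coef_exp_add_scaleX (R : comNzRingType) (g : {poly R}) (c : R) n r j :
  (((g ^:P + (c *: 'X)%:P) ^+ n)`_r)`_j =
  if (j <= n)%N then ((g ^+ (n - j))`_r * c ^+ j) *+ 'C(n, j) else 0.
Proof.
rewrite exprDn coef_sum.
under eq_bigr => i _ do
  rewrite coefMn -polyC_exp coefMC -[_ ^:P ^+ _]rmorphXn coef_map /=.
rewrite coef_sum.
under eq_bigr => i _ do rewrite coefMn coefCM exprZn coefZ coefXn.
case: ifP => hj.
  rewrite (bigD1 (Ordinal (n := n.+1) (m := j) hj)) //= big1 ?addr0 ?eqxx ?mulr1 //.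
  move=> i /eqP hi; have -> : (j == i :> nat) = false.
    by apply/eqP => h; apply: hi; apply: val_inj.
  by rewrite !mulr0 mul0rn.
rewrite big1 // => i _; have -> : (j == i :> nat) = false.
  by apply/eqP => h; move: (ltn_ord i); lia.
by rewrite !mulr0 mul0rn.
Qed.

Lemma size_coef_exp_add_scaleX (R : idomainType) (g : {poly R}) (c : R) n r m :
  c != 0 -> (m <= n)%N -> 'C(n, m)%:R != 0 :> R ->
  (forall i, (i < m)%N -> (g ^+ i)`_r = 0) -> (g ^+ m)`_r != 0 ->
  size ((g ^:P + (c *: 'X)%:P) ^+ n)`_r = (n - m).+1.
Proof.
move=> c0 mn bin0 below top; apply/eqP; rewrite eqn_leq; apply/andP; split.
  apply/leq_sizeP => j hj; rewrite coef_coef_exp_add_scaleX.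
  by case: ifP => // jn; rewrite below ?mul0r ?mul0rn //; lia.
rewrite ltnNge; apply/negP => /leq_sizeP /(_ (n - m)%N (leqnn _)); apply/eqP.
rewrite coef_coef_exp_add_scaleX leq_subr subKn // bin_sub //.
by rewrite -mulr_natr !mulf_neq0 // expf_neq0.
Qed.

Lemma prime_ndvdn_fact p n : prime p -> (n < p)%N -> ~~ (p %| n`!)%N.
Proof.
move=> pp; elim: n => [|n IH] np; first by rewrite dvdn1 neq_ltn (prime_gt1 pp) orbT.
rewrite factS Euclid_dvdM // negb_or IH 1?ltnW // andbT.
by apply/negP => /dvdn_leq; lia.
Qed.

Lemma Fp_bin_neq0 p n m : prime p -> (m <= n < p)%N -> 'C(n, m)%:R != 0 :> 'F_p.
Proof.
move=> pp /andP[mn np]; rewrite -(dvdn_pcharf (pchar_Fp pp)).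
apply: contraNN (prime_ndvdn_fact pp np) => pC.
by rewrite -(bin_fact mn) dvdn_mulr.
Qed.

Section FiberAtZero.
Variable R : comNzRingType.

Definition fpoly0 : {poly R} := 'X^5 - 5%:R *: 'X^3 + 5%:R *: 'X + (2%:R)%:P.

Lemma coef_fpoly0 i : fpoly0`_i =
  (i == 5)%:R - 5%:R * (i == 3)%:R + 5%:R * (i == 1)%:R + 2%:R * (i == 0)%:R.
Proof. by rewrite /fpoly0 !coefE; case: i => [|[|[|[|[|[|i]]]]]] /=; ring. Qed.

Lemma size_fpoly0 : (size fpoly0 <= 6)%N.
Proof.
apply/leq_sizeP => j hj; rewrite coef_fpoly0.
by case: j hj => [|[|[|[|[|[|j]]]]]] //= _; rewrite !mulr0 subr0 !addr0.
Qed.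

Lemma coef_fpoly0X_gt m r : (5 * m < r)%N -> (fpoly0 ^+ m)`_r = 0.
Proof.
move=> mr; apply/leq_sizeP; last exact: leqnn.
apply: leq_trans (size_poly_exp_leq _ _) _.
have : ((size fpoly0).-1 * m <= 5 * m)%N by apply: leq_mul => //; have := size_fpoly0; lia.
lia.
Qed.

Lemma coef_fpoly0XS m r : (fpoly0 ^+ m.+1)`_(r + 5) =
  (fpoly0 ^+ m)`_r - 5%:R * (fpoly0 ^+ m)`_(r + 2)
  + 5%:R * (fpoly0 ^+ m)`_(r + 4) + 2%:R * (fpoly0 ^+ m)`_(r + 5).
Proof.
rewrite exprSr {2}/fpoly0 !mulrDr mulrN -!scalerAr !coefD coefN !coefZ coefMC.
rewrite -['X]expr1 !coefMXn /=.
have -> : (r + 5 < 5)%N = false by lia.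
have -> : (r + 5 < 3)%N = false by lia.
have -> : (r + 5 < 1)%N = false by lia.
have -> : (r + 5 - 5 = r)%N by lia.
have -> : (r + 5 - 3 = r + 2)%N by lia.
have -> : (r + 5 - 1 = r + 4)%N by lia.
ring.
Qed.

Lemma coef_fpoly0X_top m : (fpoly0 ^+ m)`_(5 * m) = 1.
Proof.
elim: m => [|m IH]; first by rewrite expr0 coefC.
rewrite (_ : 5 * m.+1 = 5 * m + 5)%N; last lia.
by rewrite coef_fpoly0XS IH !coef_fpoly0X_gt ?mulr0 ?subr0 ?addr0 //; lia.
Qed.

Lemma coef_fpoly0X_top2 m : (fpoly0 ^+ m.+1)`_(5 * m + 3) = - (5 * m.+1)%:R.
Proof.
elim: m => [|m IH]; first by rewrite expr1 coef_fpoly0 /=; ring.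
rewrite (_ : 5 * m.+1 + 3 = (5 * m + 3) + 5)%N; last lia.
rewrite coef_fpoly0XS IH (_ : 5 * m + 3 + 2 = 5 * m.+1)%N; last lia.
by rewrite coef_fpoly0X_top !coef_fpoly0X_gt; try lia; rewrite !natrM !mulrSr; ring.
Qed.

Lemma coef_fpoly0X_top4 m :
  (fpoly0 ^+ m.+1)`_(5 * m + 1) = (5 * m.+1 + 25 * 'C(m.+1, 2))%:R.
Proof.
elim: m => [|m IH]; first by rewrite expr1 coef_fpoly0 /= bin_small //; ring.
rewrite (_ : 5 * m.+1 + 1 = (5 * m + 1) + 5)%N; last lia.
rewrite coef_fpoly0XS IH (_ : 5 * m + 1 + 2 = 5 * m + 3)%N; last lia.
rewrite (_ : 5 * m + 1 + 4 = 5 * m.+1)%N; last lia.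
rewrite coef_fpoly0X_top2 coef_fpoly0X_top coef_fpoly0X_gt; last lia.
by rewrite (binS m.+1 1) bin1 !natrD !natrM !mulrSr; ring.
Qed.

End FiberAtZero.

Lemma fpolyE p : fpoly p = (fpoly0 _) ^:P + ((- 4%:R) *: 'X : {poly 'F_p})%:P.
Proof.
apply/polyP => i; rewrite /fpoly [RHS]coefD coef_map /= coef_fpoly0 !coefE.
case: i => [|[|[|[|[|[|i]]]]]] /=; rewrite ?polyCD ?polyCN ?polyCM; try ring.
rewrite !mulr0 polyC1 mulr1 scaleNr polyC0 (_ : (2%:R : 'F_p)%:P = 2%:R) ?rmorph_nat //.
ring.
Qed.

Lemma size_cm_coef p r m d : prime p -> (2 < p)%N -> (5 * m < r + 5)%N ->
  (d + m = (p.-1)./2)%N -> (fpoly0 _ ^+ m)`_r != 0 :> 'F_p ->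
  size (cm_coef p r) = d.+1.
Proof.
move=> pp p2 mr dmn top; rewrite /cm_coef fpolyE.
have four0 : - 4%:R != 0 :> 'F_p.
  rewrite oppr_eq0 -(dvdn_pcharf (pchar_Fp pp)) (_ : 4 = 2 ^ 2)%N // Euclid_dvdX //.
  by apply/negP => /andP[/dvdn_leq]; lia.
have mn : (m <= (p.-1)./2)%N by lia.
have bin0 : 'C((p.-1)./2, m)%:R != 0 :> 'F_p.
  apply: Fp_bin_neq0 => //; rewrite mn /=.
  by rewrite -divn2; apply: leq_ltn_trans (leq_div _ _) _; lia.
have below i : (i < m)%N -> (fpoly0 _ ^+ i)`_r = 0 :> 'F_p.
  by move=> im; apply: coef_fpoly0X_gt; lia.
by rewrite (size_coef_exp_add_scaleX four0 mn bin0 below top) -dmn addnK.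
Qed.

Lemma size_cm_coef_1mod10 p h : prime p -> p = (10 * h + 1)%N ->
  size (cm_coef p (p - 1)) = (3 * h).+1 /\ size (cm_coef p (2 * p - 2)) = h.+1.
Proof.
move=> pp pE; have := prime_gt1 pp => p1.
have n_eq : ((p.-1)./2 = 5 * h)%N.
  by rewrite pE addn1 /= (_ : 10 * h = (5 * h).*2)%N ?doubleK // -mul2n mulnA.
split.
- apply: (@size_cm_coef _ _ (2 * h)) => //; rewrite ?n_eq; try lia.
  by rewrite (_ : p - 1 = 5 * (2 * h))%N ?coef_fpoly0X_top ?oner_eq0 //; lia.
- apply: (@size_cm_coef _ _ (4 * h)) => //; rewrite ?n_eq; try lia.
  by rewrite (_ : 2 * p - 2 = 5 * (4 * h))%N ?coef_fpoly0X_top ?oner_eq0 //; lia.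
Qed.

Lemma size_cm_coef_9mod10 p h : prime p -> p = (10 * h - 1)%N ->
  size (cm_coef p (p - 1)) = (3 * h - 1).+1 /\
  size (cm_coef p (2 * p - 2)) = (h - 1).+1.
Proof.
move=> pp pE; have := prime_gt1 pp => p1.
have n_eq : ((p.-1)./2 = 5 * h - 1)%N.
  by rewrite pE (_ : (10 * h - 1).-1 = (5 * h - 1).*2)%N ?doubleK //; lia.
split.
- apply: (@size_cm_coef _ _ (2 * h)) => //; rewrite ?n_eq; try lia.
  rewrite (_ : 2 * h = (2 * h - 1).+1)%N; last lia.
  rewrite (_ : p - 1 = 5 * (2 * h - 1) + 3)%N; last lia.
  rewrite coef_fpoly0X_top2 (_ : 5 * (2 * h - 1).+1 = p + 1)%N; last lia.
  by rewrite natrD pchar_Fp_0 // add0r oppr_eq0 oner_eq0.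
- apply: (@size_cm_coef _ _ (4 * h)) => //; rewrite ?n_eq; try lia.
  rewrite (_ : 4 * h = (4 * h - 1).+1)%N; last lia.
  rewrite (_ : 2 * p - 2 = 5 * (4 * h - 1) + 1)%N; last lia.
  rewrite coef_fpoly0X_top4; set x := (_ + _)%N.
  have bin2E : ('C((4 * h - 1).+1, 2) * 2 = (4 * h - 1).+1 * (4 * h - 1))%N.
    by have := bin_ffact (4 * h - 1).+1 2; rewrite ffactnS ffactn1; apply.
  have xE : (x.+1 = p * (2 * p + 1))%N by rewrite /x pE; nia.
  have : x.+1%:R = 0 :> 'F_p by rewrite xE natrM pchar_Fp_0 // mul0r.
  by rewrite mulrSr => /eqP; rewrite addr_eq0 => /eqP ->; rewrite oppr_eq0 oner_eq0.
Qed.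

Lemma even_of_odd_5k_pm1 p k : odd p -> p = (5 * k + 1)%N \/ p = (5 * k - 1)%N ->
  k = (2 * k./2)%N.
Proof.
move=> podd pE; have := odd_double_half k; have := odd_double_half p.
by rewrite podd; case: (odd k) => /=; lia.
Qed.

Theorem lemma4p5 (p : nat) :
  prime p -> (5 < p)%N -> (p %% 5 = 1 \/ p %% 5 = 4)%N ->
  forall k : nat,
    ((p = 5 * k + 1)%N ->
       size (cmN p ord0 ord0) = ((3 * k)./2).+1 /\
       size (cmN p ord_max ord_max) = (k./2).+1) /\
    ((p = 5 * k - 1)%N ->
       size (cmN p ord0 ord0) = ((3 * k)./2 - 1).+1 /\
       size (cmN p ord_max ord_max) = (k./2 - 1).+1).
Proof.
move=> pp p5 _ k; rewrite !mxE /= mul1n.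
have podd : odd p by case: (even_prime pp) => // p2; rewrite p2 in p5.
have halfE (h : nat) : ((2 * h)./2 = h)%N by rewrite mul2n doubleK.
split=> pE.
- move: (k./2) (even_of_odd_5k_pm1 podd (or_introl pE)) => h kE.
  rewrite kE mulnCA halfE; rewrite kE mulnA in pE.
  exact: size_cm_coef_1mod10.
- move: (k./2) (even_of_odd_5k_pm1 podd (or_intror pE)) => h kE.
  rewrite kE mulnCA halfE; rewrite kE mulnA in pE.
  exact: size_cm_coef_9mod10.
Qed.
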